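(* Consider SEG: $X_{t+1/2}=X_t-\gamma F_t$, $X_{t+1}=X_t-\alpha\gamma F_{t+1/2}$, where $F_t=F(X_t)+U_t(X_t)$ and $F_{t+1/2}=F(X_{t+1/2})+U_{t+1/2}(X_{t+1/2})$. Let $F:\mathbb{R}^d\to\mathbb{R}^d$ be $L$-Lipschitz, let $x^*\in X^*=\{x:F(x)=0\}$ be such that $\langle F(x),x-x^*\rangle\ge\mu\|x-x^*\|^2-\lambda$ for all $x$ (with $\lambda\ge0,\mu>0$), and assume the stochastic oracle assumptions of the context. Let $Z_t=F_{t+1/2}$. If $0<\gamma\le\frac1{\sqrt3L}$, then $$\gamma^2\,\mathbb{E}[\|Z_t\|^2\mid\mathcal{F}_t]\le2\gamma\,\mathbb{E}[\langle Z_t,X_t-x^*\rangle\mid\mathcal{F}_t]+2(\lambda\gamma+3\sigma^2\gamma^2).$$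
   Context: Stochastic oracle: noise fields are i.i.d. random fields; filtration $(\mathcal{F}_t)$ (history of the iterates) with $\mathcal{F}_{t+1/2}=\mathcal{F}_t$; $U_t(X_t)$ is $\mathcal{F}_{t+1}$- but not $\mathcal{F}_t$-measurable; $\mathbb{E}[U_t(x)\mid\mathcal{F}_t]=0$ and $\mathbb{E}[\|U_t(x)\|^2\mid\mathcal{F}_t]\le\sigma^2$ for all $x$ (and likewise for $U_{t+1/2}$). *)

From HB Require Import structures.
From mathcomp Require Import all_boot all_order all_algebra.
From mathcomp Require Import all_classical all_reals all_analysis.
Set Implicit Arguments. Unset Strict Implicit. Unset Printing Implicit Defensive.
Import Order.TTheory GRing.Theory Num.Theory.
Local Open Scope classical_set_scope.
Local Open Scope ring_scope.

Definition dotp {R : realType} {d : nat} (u v : 'rV[R]_d) : R :=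
  \sum_(i < d) u 0 i * v 0 i.
Definition enorm {R : realType} {d : nat} (u : 'rV[R]_d) : R :=
  Num.sqrt (dotp u u).

Section Cond.
Context {dT : measure_display} {T : measurableType dT} {R : realType}.
Variable P : probability T R.

Definition sub_sigma (G : set (set T)) : Prop :=
  sigma_algebra setT G /\ G `<=` measurable.

Definition Gmeas (G : set (set T)) (f : T -> R) : Prop :=
  forall B : set R, measurable B -> G (f @^-1` B).

Definition Gmeas_vec {d : nat} (G : set (set T)) (X : T -> 'rV[R]_d) : Prop :=
  forall i : 'I_d, Gmeas G (fun w => X w 0 i).

Definition is_cond_exp (G : set (set T)) (Z Y : T -> R) : Prop :=
  [/\ P.-integrable setT (EFin \o Z),
      P.-integrable setT (EFin \o Y),
      Gmeas G Y &
      forall A, G A ->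
        (\int[P]_(w in A) (Y w)%:E = \int[P]_(w in A) (Z w)%:E)%E].

Definition is_cond_exp_vec {d : nat} (G : set (set T))
    (Z Y : T -> 'rV[R]_d) : Prop :=
  forall i : 'I_d, is_cond_exp G (fun w => Z w 0 i) (fun w => Y w 0 i).

End Cond.

(* Expanding the squares of the extragradient step, the quantity
   [g^2 |Z_t|^2 - 2 g <Z_t, X_t - x*>] is bounded pointwise by
   [2 g lambda + 2 g^2 |U_t|^2 + g^2 |U_(t+1/2)|^2 + <U_(t+1/2), V>] with [V]
   known at the half step: weak monotonicity at [X_(t+1/2)] gives the [lambda]
   term, and since [(g L)^2 <= 1/3] the Lipschitz bound on
   [F X_(t+1/2) - F X_t] is absorbed by [- g^2 |F_t|^2].  Given the half-step
   information the cross term has mean zero (after truncating [V], which is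
   then undone by dominated convergence), and both noises have conditional
   variance at most [sigma^2].  Integrating over the events of [F_t] bounds
   the conditional expectation of the left-hand side by
   [2 g lambda + 3 g^2 sigma^2]. *)

From HB Require Import structures.
From mathcomp Require Import all_boot all_order all_algebra.
From mathcomp Require Import all_classical all_reals all_analysis.
From mathcomp Require Import measurable_realfun.
From mathcomp Require Import ring lra zify.
Import Order.TTheory GRing.Theory Num.Theory.
Local Open Scope classical_set_scope.
Local Open Scope ring_scope.

Section Euclidean.
Context {R : realType} {d : nat}.
Implicit Types u v : 'rV[R]_d.

Lemma dotp_ge0 u : 0 <= dotp u u.
Proof. by apply: sumr_ge0 => i _; rewrite -expr2 sqr_ge0. Qed.

Lemma enorm_ge0 u : 0 <= enorm u.
Proof. exact: sqrtr_ge0. Qed.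

Lemma enorm_sqr u : enorm u ^+ 2 = dotp u u.
Proof. by rewrite /enorm sqr_sqrtr // dotp_ge0. Qed.

Lemma enormN u : enorm (- u) = enorm u.
Proof.
rewrite /enorm /dotp; congr Num.sqrt.
by apply: eq_bigr => i _; rewrite !mxE mulrNN.
Qed.

Lemma enormB u v : enorm (u - v) = enorm (v - u).
Proof. by rewrite -enormN opprB. Qed.

Lemma enormZ (a : R) u : enorm (a *: u) = `|a| * enorm u.
Proof.
rewrite /enorm -sqrtr_sqr -sqrtrM ?sqr_ge0 //; congr Num.sqrt.
by rewrite /dotp mulr_sumr; apply: eq_bigr => i _; rewrite !mxE; ring.
Qed.

Lemma coord_le_enorm u (i : 'I_d) : `|u 0 i| <= enorm u.
Proof.
rewrite -sqrtr_sqr /enorm ler_sqrt ?dotp_ge0 // /dotp (bigD1 i) //= -expr2 lerDl.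
by apply: sumr_ge0 => j _; rewrite -expr2 sqr_ge0.
Qed.

Lemma dotpB_le u v : dotp (u - v) (u - v) <= 2 * dotp u u + 2 * dotp v v.
Proof.
rewrite /dotp !mulr_sumr -big_split /=; apply: ler_sum => i _; rewrite !mxE.
by rewrite -subr_ge0 (_ : _ - _ = (u 0 i + v 0 i) ^+ 2) ?sqr_ge0 //; ring.
Qed.

(* In the step: [p = F X_(t+1/2)], [u = U_(t+1/2)], [y = X_(t+1/2) - x*] and
   [g *: q = X_t - X_(t+1/2)]. *)
Lemma seg_expansion (g : R) (p u y q : 'rV[R]_d) :
  g ^+ 2 * dotp (p + u) (p + u) - 2 * g * dotp (p + u) (y + g *: q)
  = g ^+ 2 * dotp u u + dotp u ((2 * g ^+ 2) *: p - (2 * g) *: (y + g *: q))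
    - 2 * g * dotp p y + g ^+ 2 * dotp (p - q) (p - q) - g ^+ 2 * dotp q q.
Proof.
rewrite /dotp !mulr_sumr -!sumrN -!big_split /=.
by apply: eq_bigr => i _; rewrite !mxE; ring.
Qed.

Definition qrow (k : nat) : 'rV[R]_d :=
  if @unpickle 'rV[rat]_d k is Some r then map_mx (@ratr R) r else 0.

Lemma qrow_dense u (e : R) : 0 < e -> exists k, enorm (u - qrow k) < e.
Proof.
move=> e0; set de := e / d.+1%:R.
have de0 : 0 < de by rewrite divr_gt0 // ltr0n.
have /fin_all_exists[r hr] :
    forall i : 'I_d, exists r : rat, `|u 0 i - ratr r| < de.
  move=> i; have [q] := @rat_in_itvoo R (u 0 i - de) (u 0 i + de) ltac:(lra).
  rewrite in_itv /= => /andP[h1 h2]; exists q.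
  by rewrite ltr_norml; apply/andP; split; lra.
exists (pickle (\row_i r i : 'rV[rat]_d)); rewrite /qrow pickleK.
set v := u - _.
have hv : dotp v v <= d%:R * de ^+ 2.
  apply: (@le_trans _ _ (\sum_(i < d) de ^+ 2)).
    apply: ler_sum => i _; rewrite -expr2 !mxE -real_normK ?num_real //.
    by rewrite lerXn2r ?nnegrE ?normr_ge0 ?ltW // hr.
  by rewrite sumr_const card_ord mulr_natl.
have hde : d%:R * de ^+ 2 < e ^+ 2.
  have -> : e ^+ 2 = de ^+ 2 * d.+1%:R ^+ 2 by rewrite -exprMn divfK ?pnatr_eq0.
  by rewrite mulrC ltr_pM2l ?exprn_gt0 // -natrX ltr_nat; nia.
rewrite /enorm -(gtr0_norm e0) -sqrtr_sqr ltr_sqrt ?exprn_gt0 //.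
exact: le_lt_trans hv hde.
Qed.

End Euclidean.

Lemma seg_step_le {R : realType} {d : nat} {F : 'rV[R]_d -> 'rV[R]_d}
    {L lambda g : R} {xstar x0 e xh : 'rV[R]_d} (u : 'rV[R]_d) :
  (forall x y, enorm (F x - F y) <= L * enorm (x - y)) ->
  0 <= g -> 2 * (g * L) ^+ 2 <= 1 ->
  xh = x0 - g *: (F x0 + e) ->
  - lambda <= dotp (F xh) (xh - xstar) ->
  g ^+ 2 * enorm (F xh + u) ^+ 2 - 2 * g * dotp (F xh + u) (x0 - xstar)
  <= 2 * g * lambda + 2 * g ^+ 2 * enorm e ^+ 2 + g ^+ 2 * enorm u ^+ 2
     + dotp u ((2 * g ^+ 2) *: F xh - (2 * g) *: (x0 - xstar)).
Proof.
move=> Lip g0 gL hxh mono.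
set q := F x0 + e.
have -> : x0 - xstar = (xh - xstar) + g *: q by rewrite hxh addrAC subrK.
rewrite !enorm_sqr seg_expansion.
have Lq : dotp (F xh - F x0) (F xh - F x0) <= (g * L) ^+ 2 * dotp q q.
  have := Lip xh x0; rewrite (_ : xh - x0 = - (g *: q)); last first.
    by rewrite hxh addrC addKr.
  rewrite enormN enormZ ger0_norm // mulrA [L * g]mulrC => h.
  rewrite -!enorm_sqr -exprMn lerXn2r ?nnegrE ?enorm_ge0 //.
  exact: le_trans (enorm_ge0 _) h.
have pq : dotp (F xh - q) (F xh - q)
    <= 2 * ((g * L) ^+ 2 * dotp q q) + 2 * dotp e e.
  rewrite (_ : F xh - q = (F xh - F x0) - e); last by rewrite /q opprD addrA.
  by apply: (le_trans (dotpB_le _ _)); rewrite lerD2r ler_pM2l.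
have g2 : 0 <= g ^+ 2 := sqr_ge0 g.
have pq_g := ler_wpM2l g2 pq.
have mono_g : g * (- lambda) <= g * dotp (F xh) (xh - xstar) by rewrite ler_wpM2l.
(* The step-size condition lets [- g^2 |q|^2] absorb the Lipschitz part of
   [|F xh - q|^2]. *)
have absorb : 0 <= g ^+ 2 * dotp q q * (1 - 2 * (g * L) ^+ 2).
  by rewrite !mulr_ge0 ?dotp_ge0 // subr_ge0.
move: pq_g mono_g absorb; set a := (g * L) ^+ 2; set Q := dotp q q.
set D := dotp (F xh) _; set E := dotp e e; set P := dotp (F xh - q) _; nra.
Qed.

Lemma step_size_sqr_le {R : realType} (L g : R) :
  0 < L -> 0 < g -> g <= 1 / (Num.sqrt 3 * L) -> 3 * (g * L) ^+ 2 <= 1.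
Proof.
move=> L0 g0; rewrite ler_pdivlMr ?mulr_gt0 ?sqrtr_gt0 // mulrCA => h.
have t0 : 0 <= Num.sqrt 3 * (g * L) by rewrite !mulr_ge0 ?sqrtr_ge0 ?ltW.
have : (Num.sqrt 3 * (g * L)) ^+ 2 <= 1 by move: h t0; set t := _ * _; nra.
by rewrite exprMn sqr_sqrtr.
Qed.

Section SubSigma.
Context {dT : measure_display} {T : measurableType dT} {R : realType}.
Context {G : set (set T)} (sG : sub_sigma G).

Lemma sub_sigma_measurable A : G A -> measurable A.
Proof. exact: sG.2. Qed.

Lemma sub_sigmaI A B : G A -> G B -> G (A `&` B).
Proof.
move=> GA GB; have := @measurableI _ (g_sigma_algebraType G) A B.
by rewrite measurable_g_measurableTypeE //; [apply|exact: sG.1].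
Qed.

Lemma GmeasP (f : T -> R) :
  Gmeas G f <-> measurable_fun [set: g_sigma_algebraType G] f.
Proof.
split=> [Gf _ B mB | mf B mB].
- by rewrite setTI measurable_g_measurableTypeE; [exact: Gf | exact: sG.1].
- have := mf measurableT B mB.
  by rewrite setTI measurable_g_measurableTypeE //; exact: sG.1.
Qed.

Lemma Gmeas_measurable (f : T -> R) : Gmeas G f -> measurable_fun setT f.
Proof. by move=> Gf _ B mB; rewrite setTI; exact/sG.2/Gf. Qed.

Lemma Gmeas_vec_cst {d : nat} (c : 'rV[R]_d) : Gmeas_vec G (fun=> c).
Proof. by move=> i; apply/GmeasP; exact: measurable_cst. Qed.

Lemma Gmeas_vecB {d : nat} (X Y : T -> 'rV[R]_d) :
  Gmeas_vec G X -> Gmeas_vec G Y -> Gmeas_vec G (fun w => X w - Y w).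
Proof.
move=> GX GY i; apply/GmeasP; under eq_fun do rewrite !mxE.
by apply: measurable_funB; apply/GmeasP.
Qed.

Lemma Gmeas_vecZ {d : nat} (a : R) (X : T -> 'rV[R]_d) :
  Gmeas_vec G X -> Gmeas_vec G (fun w => a *: X w).
Proof.
move=> GX i; apply/GmeasP; under eq_fun do rewrite !mxE.
by apply: measurable_funM; [exact: measurable_cst | apply/GmeasP].
Qed.

Lemma Gmeas_enorm {d : nat} (X : T -> 'rV[R]_d) :
  Gmeas_vec G X -> Gmeas G (fun w => enorm (X w)).
Proof.
move=> GX; apply/GmeasP; apply: measurableT_comp.
  exact: continuous_measurable_fun (@sqrt_continuous R).
by apply: measurable_sum => i; apply: measurable_funM; apply/GmeasP.
Qed.

(* A Lipschitz [f] is the infimum of the cones [f q + L |x - q|] over a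
   countable dense set of centres [q]. *)
Lemma Gmeas_lipschitz {d : nat} (f : 'rV[R]_d -> R) (L : R) (X : T -> 'rV[R]_d) :
  0 <= L -> (forall x y, `|f x - f y| <= L * enorm (x - y)) ->
  Gmeas_vec G X -> Gmeas G (fun w => f (X w)).
Proof.
move=> L0 Lip GX; apply/GmeasP.
set cone := fun k w => f (qrow k) + L * enorm (X w - qrow k).
have mcone k : measurable_fun [set: g_sigma_algebraType G] (cone k).
  apply: measurable_funD; first exact: measurable_cst.
  apply: measurable_funM; first exact: measurable_cst.
  by apply/GmeasP/Gmeas_enorm/Gmeas_vecB => //; exact: Gmeas_vec_cst.
apply: (measurability _ (RGenInftyO.measurableE R)) => // _ [_ [c ->] <-].
suff -> : [set: g_sigma_algebraType G] `&` (fun w => f (X w)) @^-1` `]-oo, c[ =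
    \bigcup_k ([set: g_sigma_algebraType G] `&` cone k @^-1` `]-oo, c[).
  by apply: bigcup_measurable => k _; exact: mcone.
apply/seteqP; split => w /=; rewrite /preimage /=.
- rewrite in_itv /= => -[_ fc].
  set r := (c - f (X w)) / (2 * L + 1).
  have r0 : 0 < r by rewrite divr_gt0 ?subr_gt0 //; lra.
  have [k hk] := qrow_dense (X w) r r0.
  exists k => //; split => //; rewrite /= in_itv /= /cone.
  have := Lip (qrow k) (X w); rewrite enormB ler_norml => /andP[_ hl].
  have hLr : L * enorm (X w - qrow k) <= L * r by rewrite ler_wpM2l // ltW.
  have hr : r * (2 * L + 1) = c - f (X w) by rewrite divfK // gt_eqF //; lra.
  move: hl hLr hr; set n := enorm _; nra.
- move=> [k _ [_]] /=; rewrite in_itv /= /cone => hk; split => //.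
  have := Lip (X w) (qrow k); rewrite ler_norml in_itv /= => /andP[_ hl]; lra.
Qed.

Lemma Gmeas_vec_lipschitz {d d' : nat} (F : 'rV[R]_d -> 'rV[R]_d') (L : R)
    (X : T -> 'rV[R]_d) :
  0 <= L -> (forall x y, enorm (F x - F y) <= L * enorm (x - y)) ->
  Gmeas_vec G X -> Gmeas_vec G (fun w => F (X w)).
Proof.
move=> L0 Lip GX i; apply: (@Gmeas_lipschitz _ (fun x => F x 0 i) L) => // x y.
by apply: le_trans (Lip x y); have := coord_le_enorm (F x - F y) i; rewrite !mxE.
Qed.

End SubSigma.

Section Integrals.
Context {dT : measure_display} {T : measurableType dT} {R : realType}.
Context {P : probability T R}.
Local Notation Rintegrable S f := (P.-integrable S (EFin \o f)).
Implicit Types (S A : set T) (f h : T -> R).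

Lemma Rintegral_EFin S f : measurable S -> Rintegrable S f ->
  (\int[P]_(w in S) f w)%:E = (\int[P]_(w in S) (f w)%:E)%E.
Proof. by move=> mS i; rewrite /Rintegral fineK // integrable_fin_num. Qed.

Lemma Rintegrable_cst S (k : R) : measurable S -> Rintegrable S (fun=> k).
Proof. exact: finite_measure_integrable_cst. Qed.

Lemma RintegrableD S f h : measurable S ->
  Rintegrable S f -> Rintegrable S h -> Rintegrable S (fun w => f w + h w).
Proof.
move=> mS i1 i2; exact: eq_integrable mS _ _ _ (integrableD mS i1 i2).
Qed.

Lemma RintegrableB S f h : measurable S ->
  Rintegrable S f -> Rintegrable S h -> Rintegrable S (fun w => f w - h w).
Proof.
move=> mS i1 i2; exact: eq_integrable mS _ _ _ (integrableB mS i1 i2).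
Qed.

Lemma RintegrableZl S (k : R) f : measurable S ->
  Rintegrable S f -> Rintegrable S (fun w => k * f w).
Proof.
move=> mS i; exact: eq_integrable mS _ _ _ (integrableZl mS k i).
Qed.

Lemma Rintegrable_norm S f : Rintegrable S f -> Rintegrable S (fun w => `|f w|).
Proof. exact: integrable_abse. Qed.

Lemma RintegrableM_bounded S f h (M : R) : measurable S ->
  Rintegrable S f -> measurable_fun S h -> (forall w, S w -> `|h w| <= M) ->
  Rintegrable S (fun w => f w * h w).
Proof.
move=> mS i mh hM; have bh : [bounded h w | w in S].
  exists M; split; first exact: num_real.
  by move=> M' MM' w Sw; apply: le_trans (hM _ Sw) (ltW MM').
exact: eq_integrable mS _ _ _ (integrableMl mS i mh bh).
Qed.

Lemma Rintegrable_sum (I : Type) (s : seq I) S (h : I -> T -> R) :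
  measurable S -> (forall i, Rintegrable S (h i)) ->
  Rintegrable S (fun w => \sum_(i <- s) h i w).
Proof.
move=> mS hi.
apply: eq_integrable mS _ _ _ (integrable_sum mS s (fun i _ => hi i)).
by move=> w _; rewrite /= sumEFin.
Qed.

Lemma Rintegral_sum (I : Type) (s : seq I) S (h : I -> T -> R) :
  measurable S -> (forall i, Rintegrable S (h i)) ->
  \int[P]_(w in S) (\sum_(i <- s) h i w) = \sum_(i <- s) \int[P]_(w in S) h i w.
Proof.
move=> mS hi; apply: EFin_inj.
rewrite Rintegral_EFin //; last exact: Rintegrable_sum.
under eq_integral do rewrite -sumEFin.
rewrite integral_sum // -sumEFin; apply: eq_bigr => i _.
by rewrite Rintegral_EFin.
Qed.

Lemma Rintegral_setS_le S A f : measurable S -> measurable A -> S `<=` A ->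
  Rintegrable A f -> (forall w, A w -> 0 <= f w) ->
  \int[P]_(w in S) f w <= \int[P]_(w in A) f w.
Proof.
move=> mS mA SA iA f0; rewrite -lee_fin !Rintegral_EFin //; last first.
  exact: integrableS iA.
by apply: ge0_subset_integral => //; exact: measurable_int iA.
Qed.

Lemma Rintegral_ae_le_cst S f (c : R) : measurable S -> Rintegrable setT f ->
  0 <= c -> {ae P, forall w, f w <= c} -> \int[P]_(w in S) f w <= c * fine (P S).
Proof.
move=> mS i c0 [N [mN PN sub]].
have iS : Rintegrable S f := integrableS measurableT mS (subsetT _) i.
rewrite -lee_fin Rintegral_EFin // EFinM fineK ?fin_num_measure //.
rewrite (negligible_integral mN mS iS PN).
have mSN : measurable (S `\` N) by exact: measurableD.
apply: (@le_trans _ _ (\int[P]_(w in S `\` N) (cst c%:E) w)%E).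
  apply: le_integral => //; first exact: integrableS iS.
    exact: finite_measure_integrable_cst.
  move=> w /set_mem [_ Nw]; rewrite lee_fin.
  by apply: contra_notT Nw => /negP h; apply: sub.
rewrite integral_cst //; apply: lee_wpmul2l; first by rewrite lee_fin.
by apply: le_measure => //; rewrite inE.
Qed.

(* Dominated convergence for [f * 1_(B n)], dominated by [|f|]. *)
Lemma le_Rintegral_exhaustion A (B : nat -> set T) f (c : R) :
  measurable A -> (forall n, measurable (B n)) -> Rintegrable A f ->
  (forall w, A w -> \forall n \near \oo, B n w) ->
  (forall n, \int[P]_(w in A `&` B n) f w <= c) -> \int[P]_(w in A) f w <= c.
Proof.
move=> mA mB iA AB hn.
have mf : measurable_fun A f by apply/measurable_EFinP; exact: measurable_int iA.
set fn := fun n w => (f w * \1_(B n) w)%:E.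
have mfn n : measurable_fun A (fn n).
  by apply/measurable_EFinP/measurable_funM => //; exact: measurable_indic.
have cv : {ae P, forall w, A w -> fn ^~ w @ \oo --> (EFin \o f) w}.
  apply: aeW => w Aw; apply: cvg_near_cst; apply: filterS (AB w Aw) => n Bnw.
  by rewrite /fn indicE mem_set ?mulr1.
have dom : {ae P, forall w n, A w -> (`|fn n w| <= `|(f w)%:E|)%E}.
  apply: aeW => w n _; rewrite /fn lee_fin normrM -[leRHS]mulr1 ler_wpM2l //.
  by rewrite indicE; case: (_ \in _); rewrite ?normr0 ?normr1.
have [_ _ lim_fn] := dominated_convergence mA mfn (measurable_int _ iA) cv
  (integrable_abse iA) dom.
have fnE n : (\int[P]_(w in A) fn n w)%E = (\int[P]_(w in A `&` B n) f w)%:E.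
  have mABn := measurableI _ _ mA (mB n).
  rewrite Rintegral_EFin //; last exact: integrableS mA mABn (@subIsetl _ _ _) iA.
  rewrite integral_mkcondr; apply: eq_integral => w _.
  by rewrite /fn /patch indicE; case: (w \in B n); rewrite ?mulr1 ?mulr0.
rewrite -lee_fin Rintegral_EFin // -(cvg_lim (@ereal_hausdorff R) lim_fn).
apply: lime_le; first by apply/cvg_ex; eexists; exact: lim_fn.
by apply: nearW => n; rewrite /= fnE lee_fin.
Qed.

Lemma Rintegrable_dotp_bounded {d : nat} (U V : T -> 'rV[R]_d) S (M : R) :
  measurable S -> (forall i, Rintegrable S (fun w => U w 0 i)) ->
  (forall i, measurable_fun S (fun w => V w 0 i)) ->
  (forall w i, S w -> `|V w 0 i| <= M) ->
  Rintegrable S (fun w => dotp (U w) (V w)).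
Proof.
move=> mS iU mV VM; apply: Rintegrable_sum => // i.
by apply: (RintegrableM_bounded _ _ _ M) => // w Sw; exact: VM.
Qed.

End Integrals.

Lemma sum_le_truncn {R : realType} (x : R) (J : nat) : 0 <= x ->
  \sum_(j < J) ((j.+1%:R <= x)%R%:R : R) = (minn J (Num.trunc x))%:R.
Proof.
move=> x0; elim: J => [|J IH]; first by rewrite big_ord0 min0n.
rewrite big_ord_recr /= IH -truncn_gt_nat -natrD; congr (_%:R).
by case: (ltnP J (Num.trunc x)) => /= h; lia.
Qed.

(* [a + n^-1 * #{j < J | a + (j+1)/n <= x}] is [x] rounded down to the grid
   [a + N/n]. *)
Lemma staircase_le {R : realType} (a x n : R) (J : nat) :
  0 < n -> a <= x -> (x - a) * n < J%:R ->
  0 <= x - (a + n^-1 * \sum_(j < J) ((a + j.+1%:R / n <= x)%R%:R : R)) <= n^-1.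
Proof.
move=> n0 ax xJ; set y := (x - a) * n.
have y0 : 0 <= y by rewrite mulr_ge0 ?subr_ge0 // ltW.
have tJ : (Num.trunc y <= J)%N by apply/ltnW; rewrite truncn_lt_nat.
have -> : \sum_(j < J) ((a + j.+1%:R / n <= x)%R%:R : R) = (Num.trunc y)%:R.
  rewrite -(minn_idPr tJ) -sum_le_truncn //; apply: eq_bigr => j _.
  by rewrite addrC -lerBrDr ler_pdivrMr.
have /andP[t1 t2] := trunc_itv y0.
have yn : n^-1 * y = x - a by rewrite mulrC mulfK ?gt_eqF.
have ni : 0 < n^-1 by rewrite invr_gt0.
have p1 := ler_wpM2l (ltW ni) t1.
have p2 := ler_wpM2l (ltW ni) (ltW t2).
move: p1 p2 yn; rewrite -natr1 mulrDr mulr1.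
set t := n^-1 * _; set m := n^-1 * y => p1 p2 yn; apply/andP; split; lra.
Qed.

Lemma indic_staircase_le {T : Type} {R : realType} (v : T -> R) (M n : R) w :
  0 < n -> `|v w| <= M ->
  0 <= v w - (- M + n^-1 * \sum_(j < (Num.trunc (2 * M * n)).+1)
                             \1_(v @^-1` `[- M + j.+1%:R / n, +oo[) w) <= n^-1.
Proof.
move=> n0 vM; have := vM; rewrite ler_norml => /andP[vl vr].
set J := (Num.trunc (2 * M * n)).+1.
rewrite (eq_bigr (fun j : 'I_J => ((- M + j.+1%:R / n <= v w)%R%:R : R))).
  apply: staircase_le => //.
  have M0 : 0 <= M := le_trans (normr_ge0 _) vM.
  have Mn0 : 0 <= 2 * M * n by rewrite !mulr_ge0 // ltW.
  have /andP[_] := trunc_itv Mn0.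
  by apply: le_lt_trans; rewrite ler_pM2r //; lra.
move=> j _; rewrite indicE; congr (nat_of_bool _)%:R.
by apply/idP/idP => [/set_mem|?]; last apply/mem_set;
  rewrite /preimage /= in_itv /= andbT.
Qed.

Lemma eq0_le_div_natr {R : realType} (r K : R) :
  (forall N : nat, `|r| <= K / N.+1%:R) -> r = 0.
Proof.
move=> h; apply/eqP; apply: contraT => r0.
have {r0}ar : 0 < `|r| by rewrite normr_gt0.
have K0 : 0 <= K by have := h 0%N; rewrite divr1; apply: le_trans.
have := h (Num.trunc (K / `|r|)); rewrite ler_pdivlMr ?ltr0n // => hK.
have /andP[_] := trunc_itv (divr_ge0 K0 (ltW ar)).
by rewrite ltr_pdivrMr // mulrC ltNge hK.
Qed.

Section CondExp.
Context {dT : measure_display} {T : measurableType dT} {R : realType}.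
Variable P : probability T R.
Context {G : set (set T)} (sG : sub_sigma G).
Local Notation Rintegrable S f := (P.-integrable S (EFin \o f)).
Implicit Types (S A : set T) (u v Z Y : T -> R).

Lemma is_cond_exp_Rintegral {Z Y A} : is_cond_exp P G Z Y -> G A ->
  \int[P]_(w in A) Y w = \int[P]_(w in A) Z w.
Proof. by case=> _ _ _ e GA; rewrite /Rintegral e. Qed.

Lemma is_cond_exp_lin (a b : R) Z1 Z2 Y1 Y2 :
  is_cond_exp P G Z1 Y1 -> is_cond_exp P G Z2 Y2 ->
  is_cond_exp P G (fun w => a * Z1 w - b * Z2 w) (fun w => a * Y1 w - b * Y2 w).
Proof.
move=> h1 h2; case: (h1) => iZ1 iY1 GY1 _; case: (h2) => iZ2 iY2 GY2 _.
have lin S f1 f2 : measurable S -> Rintegrable S f1 -> Rintegrable S f2 ->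
    Rintegrable S (fun w => a * f1 w - b * f2 w).
  by move=> mS i1 i2; apply: RintegrableB => //; exact: RintegrableZl.
split; [exact: lin | exact: lin | |].
- apply/(GmeasP sG); apply: measurable_funB; apply: measurable_funM;
    by [exact: measurable_cst | apply/(GmeasP sG)].
- move=> A GA; have mA := sub_sigma_measurable sG _ GA.
  have iA f : Rintegrable setT f -> Rintegrable A f.
    exact: integrableS measurableT mA (subsetT _).
  rewrite -!Rintegral_EFin ?lin ?iA //; congr EFin.
  rewrite !RintegralB ?RintegralZl ?iA //;
    try by apply: RintegrableZl => //; exact: iA.
  by rewrite (is_cond_exp_Rintegral h1 GA) (is_cond_exp_Rintegral h2 GA).
Qed.

Lemma cond_exp_Rintegral_le Z Y (c : R) A : is_cond_exp P G Z Y ->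
  0 <= c -> {ae P, forall w, Y w <= c} -> G A ->
  \int[P]_(w in A) Z w <= c * fine (P A).
Proof.
move=> hY c0 Yc GA; rewrite -(is_cond_exp_Rintegral hY GA).
apply: Rintegral_ae_le_cst => //; first exact: sub_sigma_measurable sG _ GA.
by case: hY.
Qed.

(* On [A = {Y > c}] the integral of [Y - c] is nonnegative and, by hypothesis,
   nonpositive; hence [A] is null. *)
Lemma cond_exp_ae_le Z Y (c : R) : is_cond_exp P G Z Y ->
  (forall A, G A -> \int[P]_(w in A) Z w <= c * fine (P A)) ->
  {ae P, forall w, Y w <= c}.
Proof.
move=> hY hZ; case: (hY) => _ iY GY _.
set A := Y @^-1` `]c, +oo[.
have GA : G A by apply: GY; exact: measurable_itv.
have mA := sub_sigma_measurable sG _ GA.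
have YA w : A w -> c < Y w by rewrite /A /preimage /= in_itv /= andbT.
have iD : Rintegrable A (fun w => Y w - c).
  apply: RintegrableB => //; last exact: Rintegrable_cst.
  exact: integrableS measurableT mA (subsetT _) iY.
have intD : \int[P]_(w in A) (Y w - c) <= 0.
  rewrite RintegralB //; last by [exact: Rintegrable_cst];
    last exact: integrableS measurableT mA (subsetT _) iY.
  by rewrite Rintegral_cst // (is_cond_exp_Rintegral hY GA) subr_le0 hZ.
have mD : measurable_fun A (EFin \o (fun w => Y w - c)) := measurable_int _ iD.
have : (\int[P]_(w in A) `|(Y w - c)%:E|)%E = 0.
  transitivity (\int[P]_(w in A) (Y w - c)%:E)%E.
    apply: eq_integral => w /set_mem Aw.
    by rewrite gee0_abs // lee_fin subr_ge0 ltW // YA.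
  apply/eqP; rewrite eq_le -Rintegral_EFin // !lee_fin intD /=.
  by apply: Rintegral_ge0 => w Aw; rewrite subr_ge0 ltW // YA.
move/(ae_eq_integral_abs P mA mD); apply: filterS => w h.
rewrite leNgt; apply/negP => cY.
have Aw : A w by rewrite /A /preimage /= in_itv /= andbT.
by move: (h Aw) => /= [] /eqP; rewrite subr_eq0 gt_eqF.
Qed.

Lemma Rintegral_mul_indic_cond_exp0 u S E :
  (forall A, G A -> \int[P]_(w in A) u w = 0) -> G S -> G E ->
  \int[P]_(w in S) (u w * \1_E w) = 0.
Proof.
move=> u0 GS GE; rewrite -(u0 (S `&` E)); last exact: sub_sigmaI.
rewrite Rintegral_mkcondr.
apply: eq_Rintegral => w _.
by rewrite /patch indicE; case: (w \in E); rewrite ?mulr1 ?mulr0.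
Qed.

Lemma Rintegral_mul_staircase_cond_exp0 u S (a k : R) (E : nat -> set T) J :
  Rintegrable setT u -> (forall A, G A -> \int[P]_(w in A) u w = 0) ->
  G S -> (forall j, G (E j)) ->
  \int[P]_(w in S) (u w * (a + k * \sum_(j < J) \1_(E j) w)) = 0.
Proof.
move=> iu u0 GS GE; have mS := sub_sigma_measurable sG _ GS.
have iuS : Rintegrable S u := integrableS measurableT mS (subsetT _) iu.
have iuE j : Rintegrable S (fun w => u w * \1_(E j) w).
  apply: (RintegrableM_bounded _ _ _ 1) => //.
  - exact/measurable_indic/(sub_sigma_measurable sG _ (GE j)).
  - by move=> w _; rewrite indicE; case: (_ \in _); rewrite ?normr0 ?normr1.
under eq_Rintegral do rewrite mulrDr mulrCA mulr_sumr (mulrC _ a).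
rewrite RintegralD //; [|exact: RintegrableZl|].
- rewrite !RintegralZl //; last exact: Rintegrable_sum.
  rewrite Rintegral_sum // big1 ?mulr0 ?addr0; last first.
    by move=> j _; exact: Rintegral_mul_indic_cond_exp0.
  by rewrite (u0 _ GS) mulr0.
- by apply: RintegrableZl => //; exact: Rintegrable_sum.
Qed.

(* [v] is approximated within [1/n] from below by the staircase [s], a finite
   combination of indicators of sets of [G], against which [u] integrates to 0. *)
Lemma Rintegral_mul_cond_exp0 u v S (M : R) :
  Rintegrable setT u -> (forall A, G A -> \int[P]_(w in A) u w = 0) ->
  Gmeas G v -> G S -> (forall w, S w -> `|v w| <= M) ->
  \int[P]_(w in S) (u w * v w) = 0.
Proof.
move=> iu u0 Gv GS vM; have mS := sub_sigma_measurable sG _ GS.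
have iuS : Rintegrable S u := integrableS measurableT mS (subsetT _) iu.
have mv : measurable_fun S v.
  exact: measurable_funS measurableT (subsetT _) (Gmeas_measurable sG _ Gv).
have iuv : Rintegrable S (fun w => u w * v w) by exact: RintegrableM_bounded vM.
apply: (@eq0_le_div_natr _ _ (\int[P]_(w in S) `|u w|)) => N.
set n : R := N.+1%:R; have n0 : 0 < n by rewrite ltr0n.
set E := fun j : nat => v @^-1` `[- M + j.+1%:R / n, +oo[.
have GE j : G (E j) by apply: Gv; exact: measurable_itv.
set s := fun w =>
  - M + n^-1 * \sum_(j < (Num.trunc (2 * M * n)).+1) \1_(E j) w.
have vs w : S w -> 0 <= v w - s w <= n^-1.
  by move=> Sw; exact: indic_staircase_le (vM w Sw).
have ms : measurable_fun S s.
  apply: measurable_funD; first exact: measurable_cst.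
  apply: measurable_funM; first exact: measurable_cst.
  apply: measurable_sum => j.
  exact/measurable_indic/(sub_sigma_measurable sG _ (GE j)).
have ius : Rintegrable S (fun w => u w * s w).
  apply: (RintegrableM_bounded _ _ _ (M + n^-1)) => // w Sw.
  have ni : 0 < n^-1 by rewrite invr_gt0.
  have := vs w Sw; have := vM w Sw; rewrite !ler_norml.
  set k := n^-1 in ni *.
  by move=> /andP[? ?] /andP[? ?]; apply/andP; split; lra.
have us0 : \int[P]_(w in S) (u w * s w) = 0.
  exact: Rintegral_mul_staircase_cond_exp0.
rewrite -[X in `|X|]subr0 -us0 -RintegralB //.
have iud : Rintegrable S (fun w => u w * v w - u w * s w).
  exact: RintegrableB.
apply: le_trans (le_normr_Rintegral mS iud) _.
have iau : Rintegrable S (fun w => `|u w|) by exact: Rintegrable_norm.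
rewrite mulrC -RintegralZl //; apply: le_Rintegral => //.
- exact: Rintegrable_norm.
- exact: RintegrableZl.
- move=> w Sw; have /andP[vs0 vs1] := vs w Sw.
  by rewrite -mulrBr normrM mulrC ler_wpM2r // ger0_norm.
Qed.

Lemma is_cond_exp_vec0_Rintegral {d : nat} (U : T -> 'rV[R]_d) i A :
  is_cond_exp_vec P G U (fun=> 0) -> G A -> \int[P]_(w in A) U w 0 i = 0.
Proof.
move=> hU GA; rewrite -(is_cond_exp_Rintegral (hU i) GA).
under eq_Rintegral do rewrite mxE.
by rewrite Rintegral_cst ?mul0r //; exact: sub_sigma_measurable sG _ GA.
Qed.

Lemma Rintegral_dotp_cond_exp0 {d : nat} (U V : T -> 'rV[R]_d) S (M : R) :
  is_cond_exp_vec P G U (fun=> 0) -> Gmeas_vec G V -> G S ->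
  (forall w i, S w -> `|V w 0 i| <= M) ->
  \int[P]_(w in S) dotp (U w) (V w) = 0.
Proof.
move=> hU GV GS VM; have mS := sub_sigma_measurable sG _ GS.
have iU i : Rintegrable S (fun w => U w 0 i).
  by case: (hU i) => iU _ _ _; exact: integrableS measurableT mS (subsetT _) iU.
have mV i : measurable_fun S (fun w => V w 0 i).
  exact: measurable_funS measurableT (subsetT _) (Gmeas_measurable sG _ (GV i)).
rewrite /dotp Rintegral_sum // => [|i]; last first.
  by apply: (RintegrableM_bounded _ _ _ M) => // w Sw; exact: VM.
apply: big1 => i _; apply: (Rintegral_mul_cond_exp0 _ _ _ M _ _ (GV i) GS).
- by case: (hU i).
- by move=> A GA; exact: is_cond_exp_vec0_Rintegral.
- by move=> w Sw; exact: VM.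
Qed.

(* Truncating to the sets [{sum_i |V_i| <= n}] of [G] makes the noise term
   integrable with integral 0; the truncation is then removed by dominated
   convergence. *)
Lemma Rintegral_le_dotp_noise {d : nat} (U V : T -> 'rV[R]_d) (f h : T -> R) A :
  is_cond_exp_vec P G U (fun=> 0) -> Gmeas_vec G V -> G A ->
  Rintegrable setT f -> Rintegrable setT h -> (forall w, 0 <= h w) ->
  (forall w, f w <= h w + dotp (U w) (V w)) ->
  \int[P]_(w in A) f w <= \int[P]_(w in A) h w.
Proof.
move=> hU GV GA iF iH h0 fh; have mA := sub_sigma_measurable sG _ GA.
set Vs := fun w => \sum_(i < d) `|V w 0 i|.
have Vs0 w : 0 <= Vs w by apply: sumr_ge0.
set B := fun n : nat => Vs @^-1` `]-oo, n%:R].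
have GB n : G (B n).
  apply: (proj2 (GmeasP sG Vs)); last exact: measurable_itv.
  apply: measurable_sum => i; apply: measurableT_comp => //.
  exact/(GmeasP sG).
have GAB n : G (A `&` B n) by exact: sub_sigmaI.
have VB n w i : B n w -> `|V w 0 i| <= n%:R.
  rewrite /B /preimage /= in_itv /=; apply: le_trans.
  by rewrite /Vs (bigD1 i) //= lerDl; apply: sumr_ge0.
apply: (le_Rintegral_exhaustion _ B) => //.
- by move=> n; exact: sub_sigma_measurable sG _ (GB n).
- exact: integrableS measurableT mA (subsetT _) iF.
- move=> w _; exists (Num.trunc (Vs w)).+1 => // n /= hn.
  by rewrite /B /preimage /= in_itv /= ltW // -truncn_lt_nat.
move=> n; have mAB := sub_sigma_measurable sG _ (GAB n).
have iAB g : Rintegrable setT g -> Rintegrable (A `&` B n) g.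
  exact: integrableS measurableT mAB (subsetT _).
have VM w i : (A `&` B n) w -> `|V w 0 i| <= n%:R by move=> [_]; exact: VB.
have iUV : Rintegrable (A `&` B n) (fun w => dotp (U w) (V w)).
  apply: Rintegrable_dotp_bounded VM => // i.
    by case: (hU i) => iU _ _ _; exact: iAB.
  exact: measurable_funS measurableT (subsetT _) (Gmeas_measurable sG _ (GV i)).
apply: (@le_trans _ _ (\int[P]_(w in A `&` B n) (h w + dotp (U w) (V w)))).
  by apply: le_Rintegral => //; [exact: iAB | exact: RintegrableD (iAB _ iH) iUV].
rewrite RintegralD //; last exact: iAB.
rewrite (Rintegral_dotp_cond_exp0 _ _ _ _ hU GV (GAB n) VM) addr0.
apply: Rintegral_setS_le => //.
exact: integrableS measurableT mA (subsetT _) iH.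
Qed.

End CondExp.

Lemma Rintegral_le_noise_variance {dT : measure_display} {T : measurableType dT}
    {R : realType} (P : probability T R) {d : nat} {Ft Gh : set (set T)}
    {W N0 N1 E0 E1 : T -> R} {U V : T -> 'rV[R]_d} {c a b s : R} {A : set T} :
  sub_sigma Ft -> sub_sigma Gh -> Ft `<=` Gh ->
  0 <= c -> 0 <= a -> 0 <= b -> 0 <= s ->
  (forall w, 0 <= N0 w) -> is_cond_exp P Ft N0 E0 ->
  {ae P, forall w, E0 w <= s} ->
  (forall w, 0 <= N1 w) -> is_cond_exp P Gh N1 E1 ->
  {ae P, forall w, E1 w <= s} ->
  is_cond_exp_vec P Gh U (fun=> 0) -> Gmeas_vec Gh V ->
  P.-integrable setT (EFin \o W) ->
  (forall w, W w <= c + a * N0 w + b * N1 w + dotp (U w) (V w)) ->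
  Ft A -> \int[P]_(w in A) W w <= (c + (a + b) * s) * fine (P A).
Proof.
move=> sFt sGh FtGh c0 a0 b0 s0 N00 hE0 E0s N10 hE1 E1s hU GV iW WH FA.
have [iN0 _ _ _] := hE0; have [iN1 _ _ _] := hE1.
have mA := sub_sigma_measurable sFt _ FA.
have iA f : P.-integrable setT (EFin \o f) -> P.-integrable A (EFin \o f).
  exact: integrableS measurableT mA (subsetT _).
have iH0 : P.-integrable setT (EFin \o (fun w => c + a * N0 w)).
  by apply: RintegrableD => //; [exact: Rintegrable_cst | exact: RintegrableZl].
have iH : P.-integrable setT (EFin \o (fun w => c + a * N0 w + b * N1 w)).
  by apply: RintegrableD => //; exact: RintegrableZl.
have H0 w : 0 <= c + a * N0 w + b * N1 w by rewrite !addr_ge0 ?mulr_ge0.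
apply: le_trans
  (Rintegral_le_dotp_noise P sGh _ _ _ _ _ hU GV (FtGh _ FA) iW iH H0 WH) _.
rewrite !RintegralD ?Rintegral_cst ?RintegralZl ?iA //;
  try by [exact: Rintegrable_cst | exact: RintegrableZl].
have := ler_wpM2l a0 (cond_exp_Rintegral_le P sFt _ _ _ _ hE0 s0 E0s FA).
have := ler_wpM2l b0 (cond_exp_Rintegral_le P sGh _ _ _ _ hE1 s0 E1s (FtGh _ FA)).
lra.
Qed.

Theorem propositionB1 (dT : measure_display) (T : measurableType dT)
  (R : realType) (P : probability T R) (d : nat)
  (F : 'rV[R]_d -> 'rV[R]_d) (L mu lambda sigma gamma : R)
  (xstar : 'rV[R]_d)
  (Ft Gh : set (set T))
  (X : T -> 'rV[R]_d) (U0 U1 : T -> 'rV[R]_d -> 'rV[R]_d) :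
  0 < L ->
  (forall x y, enorm (F x - F y) <= L * enorm (x - y)) ->
  F xstar = 0 ->
  0 <= lambda -> 0 < mu ->
  (forall x, dotp (F x) (x - xstar) >= mu * enorm (x - xstar) ^+ 2 - lambda) ->
  sub_sigma Ft -> sub_sigma Gh -> Ft `<=` Gh ->
  Gmeas_vec Ft X ->
  let Xh := fun w => X w - gamma *: (F (X w) + U0 w (X w)) in
  let Z := fun w => F (Xh w) + U1 w (Xh w) in
  Gmeas_vec Gh Xh ->
  (* stochastic oracle at step t (conditioning on F_t) *)
  (forall xi : T -> 'rV[R]_d, Gmeas_vec Ft xi ->
     is_cond_exp_vec P Ft (fun w => U0 w (xi w)) (fun _ => 0) /\
     exists Y, is_cond_exp P Ft (fun w => enorm (U0 w (xi w)) ^+ 2) Y /\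
               {ae P, forall w, Y w <= sigma ^+ 2}) ->
  (* stochastic oracle at step t+1/2 *)
  (forall xi : T -> 'rV[R]_d, Gmeas_vec Gh xi ->
     is_cond_exp_vec P Gh (fun w => U1 w (xi w)) (fun _ => 0) /\
     exists Y, is_cond_exp P Gh (fun w => enorm (U1 w (xi w)) ^+ 2) Y /\
               {ae P, forall w, Y w <= sigma ^+ 2}) ->
  0 < gamma -> gamma <= 1 / (Num.sqrt 3 * L) ->
  forall Y1 Y2 : T -> R,
    is_cond_exp P Ft (fun w => enorm (Z w) ^+ 2) Y1 ->
    is_cond_exp P Ft (fun w => dotp (Z w) (X w - xstar)) Y2 ->
    {ae P, forall w,
       gamma ^+ 2 * Y1 w <=
       2 * gamma * Y2 w + 2 * (lambda * gamma + 3 * sigma ^+ 2 * gamma ^+ 2)}.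
Proof.
move=> L0 Lip _ lam0 mu0 mono sFt sGh FtGh GX Xh Z GXh orc0 orc1 g0 gle.
move=> Y1 Y2 hY1 hY2.
have [_ [E0 [hE0 E0s]]] := orc0 X GX.
have [hU1 [E1 [hE1 E1s]]] := orc1 Xh GXh.
have gL : 2 * (gamma * L) ^+ 2 <= 1.
  by have := step_size_sqr_le _ _ L0 g0 gle; have := sqr_ge0 (gamma * L); lra.
have mono0 x : - lambda <= dotp (F x) (x - xstar).
  apply: le_trans (mono x).
  by have := mulr_ge0 (ltW mu0) (sqr_ge0 (enorm (x - xstar))); lra.
have WH w :=
  seg_step_le (U1 w (Xh w)) Lip (ltW g0) gL (erefl (Xh w)) (mono0 (Xh w)).
have GX' : Gmeas_vec Gh X by move=> i B mB; exact/FtGh/GX.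
have GFXh := Gmeas_vec_lipschitz sGh F L Xh (ltW L0) Lip GXh.
have GXs := Gmeas_vecB sGh _ _ GX' (Gmeas_vec_cst sGh xstar).
have GV := Gmeas_vecB sGh _ _ (Gmeas_vecZ sGh (2 * gamma ^+ 2) _ GFXh)
  (Gmeas_vecZ sGh (2 * gamma) _ GXs).
have hW := is_cond_exp_lin P sFt (gamma ^+ 2) (2 * gamma) _ _ _ _ hY1 hY2.
have [iW _ _ _] := hW.
have gl0 : 0 <= 2 * gamma * lambda by rewrite !mulr_ge0 // ltW.
have := Rintegral_le_noise_variance P sFt sGh FtGh gl0
  (mulr_ge0 (ler0n _ 2) (sqr_ge0 gamma)) (sqr_ge0 gamma) (sqr_ge0 sigma)
  (fun w => sqr_ge0 _) hE0 E0s (fun w => sqr_ge0 _) hE1 E1s hU1 GV iW WH.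
move/(cond_exp_ae_le P sFt _ _ _ hW); apply: filterS => w.
by have := mulr_ge0 (sqr_ge0 gamma) (sqr_ge0 sigma); lra.
Qed.
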